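(* Let $\Omega>0$, let $0<\sigma\leq m_{\min}$ and let $n\geq 2$ be an integer. Then there exist a positive discrete measure $\mu=\sum_{j=1}^{n}a_j\delta_{y_j}$ on $\mathbb R$ with $n$ distinct supports $y_1,\dots,y_n\in\mathbb R$ and amplitudes $a_j>0$, and a positive discrete measure $\hat \mu=\sum_{j=1}^{n-1}\hat a_j \delta_{\hat y_j}$ with $n-1$ supports $\hat y_j\in\mathbb R$ and amplitudes $\hat a_j>0$, such that \[ \max_{\omega\in[-\Omega,\Omega]}\big|\mathcal F[\hat \mu](\omega)-\mathcal F [\mu](\omega)\big|< \sigma, \] and moreover \[ \min_{1\leq j\leq n}|a_j|= m_{\min}, \qquad \min_{p\neq j}|y_p-y_j|= \frac{2e^{-1}}{\Omega}\Big(\frac{\sigma}{m_{\min}}\Big)^{\frac{1}{2n-2}}. \]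
   Context: For a discrete measure $\nu=\sum_{j} c_j\delta_{x_j}$ on $\mathbb R$, its Fourier transform is $\mathcal F[\nu](\omega)=\sum_j c_j e^{i x_j\omega}$, $\omega\in\mathbb R$. Here $\Omega>0$ is the cutoff frequency, $\sigma>0$ the noise level and $m_{\min}>0$ a prescribed minimal amplitude. *)

From HB Require Import structures.
From mathcomp Require Import all_boot all_order all_algebra.
From mathcomp Require Import reals trigo.
From mathcomp.real_closed Require Import complex.
Set Implicit Arguments. Unset Strict Implicit. Unset Printing Implicit Defensive.
Import Order.TTheory GRing.Theory Num.Theory.
Local Open Scope ring_scope.
Local Open Scope complex_scope.

Definition expi {R : realType} (t : R) : R[i] := cos t +i* sin t.

(* Fourier transform of the discrete measure  sum_{j<k} c_j delta_{x_j}: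
   F[nu](w) = sum_j c_j e^{i x_j w}. *)
Definition fourier {R : realType} {k : nat} (c x : 'I_k -> R) (w : R) : R[i] :=
  \sum_(j < k) (c j)%:C * expi (x j * w).

From HB Require Import structures.
From mathcomp Require Import all_boot all_order all_algebra.
From mathcomp Require Import reals.
From mathcomp.analysis Require Import sequences exp trigo derive.
From mathcomp Require Import topology normedtype.
From mathcomp.real_closed Require Import complex.
From mathcomp Require Import ring lra.
Import Order.TTheory GRing.Theory Num.Theory.
Import numFieldNormedType.Exports.
Local Open Scope ring_scope.
Local Open Scope complex_scope.

(* Put [N = n - 1] and let [h] be half the separation.  The measures
   [mu = m sum_j C(2N, 2j) delta_(2jh)] and
   [muh = m sum_j C(2N, 2j+1) delta_((2j+1)h)] split the binomial expansion of
   [(1 - z)^(2N)] at [z = e^(ihw)] into its even and odd parts, so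
   [F[muh](w) - F[mu](w) = - m (1 - e^(ihw))^(2N)].  Since
   [|1 - e^(it)| <= |t|], this is at most [m (h Omega)^(2N)] on
   [[-Omega, Omega]], and the choice [h Omega = e^-1 (sigma / m)^(1/(2N))]
   makes this [e^(-2N) sigma < sigma]. *)

Section ComplexExponential.
Context {R : realType}.
Implicit Types t u : R.

Lemma ler_norm_sin t : `|sin t| <= `|t|.
Proof.
wlog t_ge0 : t / 0 <= t.
  move=> le_sin; have [/le_sin //|t_lt0] := leP 0 t.
  by rewrite -normrN -sinN -(normrN t) le_sin // oppr_ge0 ltW.
move: t_ge0; rewrite le_eqVlt => /predU1P[<-|t_gt0]; first by rewrite sin0.
have [|c _] := @MVT R sin cos 0 t t_gt0 (fun u _ => is_derive_sin u).
  exact/continuous_subspaceT/continuous_sin.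
rewrite sin0 !subr0 => ->.
by rewrite normrM ler_piMl ?cos_max.
Qed.

Lemma expi0 : expi (0 : R) = 1.
Proof. by rewrite /expi cos0 sin0. Qed.

Lemma expiD t u : expi (t + u) = expi t * expi u.
Proof. by rewrite /expi cosD sinD; simpc; congr (_ +i* _); ring. Qed.

Lemma expiM_natl (k : nat) t : expi (k%:R * t) = expi t ^+ k.
Proof.
elim: k => [|k IHk]; first by rewrite mul0r expi0.
by rewrite -addn1 natrD mulrDl mul1r expiD IHk exprD.
Qed.

(* [|1 - e^(it)|^2 = 2 - 2 cos t = 4 sin^2 (t/2)] *)
Lemma ler_norm1B_expi t : `|1 - expi t| <= `|t|%:C.
Proof.
rewrite normc_def /= lecR -sqrtr_sqr ler_sqrt ?sqr_ge0 //.
set s := sin (t / 2).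
have cos_half : cos t = 1 - 2 * s ^+ 2.
  have -> : t = (t / 2) *+ 2 by rewrite -mulr_natr divfK // pnatr_eq0.
  by rewrite cos_mulr2n cos2sin2 /s mulr2n; lra.
have s2_le : s ^+ 2 <= (t / 2) ^+ 2.
  rewrite -(real_normK (num_real s)) -(real_normK (num_real (t / 2))).
  by rewrite ler_sqr ?nnegrE // ler_norm_sin.
have := sin2cos2 t; nra.
Qed.

Lemma fourier_lattice (k : nat) (c : 'I_k -> R) (f : 'I_k -> nat) h w :
  fourier c (fun j => (f j)%:R * h) w
  = \sum_(j < k) (c j)%:C * expi (h * w) ^+ f j.
Proof. by apply: eq_bigr => j _; rewrite -mulrA expiM_natl. Qed.

End ComplexExponential.

Lemma sum_ord_even_odd (V : nmodType) (F : nat -> V) (k : nat) :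
  \sum_(i < k.*2.+1) F i = \sum_(j < k.+1) F j.*2 + \sum_(j < k) F j.*2.+1.
Proof.
elim: k => [|k IHk]; first by rewrite !big_ord_recr !big_ord0 /= !add0r addr0.
rewrite doubleS (big_ord_recr k.*2.+2) (big_ord_recr k.*2.+1) /= IHk.
rewrite (big_ord_recr k.+1) (big_ord_recr k) /= doubleS [in RHS]big_ord_recr /=.
by rewrite -!addrA; do 2 congr (_ + _); rewrite [RHS]addrC -addrA.
Qed.

Lemma expr1B_double_even_odd (S : comPzRingType) (z : S) (N : nat) :
  (1 - z) ^+ N.*2 = \sum_(j < N.+1) z ^+ j.*2 *+ 'C(N.*2, j.*2)
                    - \sum_(j < N) z ^+ j.*2.+1 *+ 'C(N.*2, j.*2.+1).
Proof.
rewrite exprBn (sum_ord_even_odd _ (fun i =>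
  (-1) ^+ i * 1 ^+ (N.*2 - i) * z ^+ i *+ 'C(N.*2, i))) -sumrN.
congr (_ + _); apply: eq_bigr => j _; rewrite expr1n mulr1 -signr_odd /= odd_double.
- by rewrite mul1r.
- by rewrite mulN1r mulNrn.
Qed.

Section BinomialPair.
Context {R : realType}.
Variables (m h : R) (N : nat).

Definition binom_even_amp : 'I_N.+1 -> R := fun j => m * 'C(N.*2, j.*2)%:R.
Definition binom_odd_amp : 'I_N -> R := fun j => m * 'C(N.*2, j.*2.+1)%:R.
Definition even_nodes : 'I_N.+1 -> R := fun j => (j.*2)%:R * h.
Definition odd_nodes : 'I_N -> R := fun j => (j.*2.+1)%:R * h.

Lemma fourier_binom_odd_subr_even w :
  fourier binom_odd_amp odd_nodes w - fourier binom_even_amp even_nodes w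
  = - (m%:C * (1 - expi (h * w)) ^+ N.*2).
Proof.
rewrite !fourier_lattice expr1B_double_even_odd mulrBr opprB.
by congr (_ + _); [|congr (- _)]; rewrite mulr_sumr; apply: eq_bigr => j _;
  rewrite rmorphM rmorph_nat -mulrA mulr_natl mulrnAr.
Qed.

Lemma norm_fourier_binom_le (Omega w : R) :
  0 <= m -> 0 <= h -> `|w| <= Omega ->
  `|fourier binom_odd_amp odd_nodes w - fourier binom_even_amp even_nodes w|
  <= (m * (h * Omega) ^+ N.*2)%:C.
Proof.
move=> m_ge0 h_ge0 w_le.
rewrite fourier_binom_odd_subr_even normrN normrM normrX ger0_norm ?ler0c //.
have Omega_ge0 : 0 <= Omega by apply: le_trans w_le.
rewrite rmorphM rmorphXn ler_wpM2l ?ler0c //.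
rewrite lerXn2r ?nnegrE ?normr_ge0 ?ler0c ?mulr_ge0 //.
apply: le_trans (ler_norm1B_expi _) _.
by rewrite lecR normrM ger0_norm // ler_wpM2l.
Qed.

Lemma binom_even_amp_ge (j : 'I_N.+1) : 0 <= m -> m <= binom_even_amp j.
Proof.
move=> m_ge0; rewrite ler_peMr // ler1n bin_gt0 leq_double -ltnS.
exact: ltn_ord.
Qed.

Lemma binom_even_amp0 : binom_even_amp ord0 = m.
Proof. by rewrite /binom_even_amp bin0 mulr1. Qed.

Lemma binom_odd_amp_gt0 (j : 'I_N) : 0 < m -> 0 < binom_odd_amp j.
Proof.
by move=> m_gt0; rewrite mulr_gt0 // ltr0n bin_gt0 ltn_double.
Qed.

Lemma even_nodes_sep (p j : 'I_N.+1) :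
  0 <= h -> p != j -> h *+ 2 <= `|even_nodes p - even_nodes j|.
Proof.
move=> h_ge0 neq_pj; rewrite -mulrBl normrM (ger0_norm h_ge0) -[h *+ 2]mulr_natl.
rewrite -subr_ge0 -mulrBl mulr_ge0 // subr_ge0.
have [lt_pj|lt_jp|/val_inj eq_pj] := ltngtP p j; last by rewrite eq_pj eqxx in neq_pj.
- rewrite distrC -natrB ?leq_double 1?ltnW // normr_nat ler_nat -doubleB.
  by rewrite -[2%N]/(1.*2) leq_double subn_gt0.
- rewrite -natrB ?leq_double 1?ltnW // normr_nat ler_nat -doubleB.
  by rewrite -[2%N]/(1.*2) leq_double subn_gt0.
Qed.

Lemma even_nodes_inj : 0 < h -> injective even_nodes.
Proof.
move=> h_gt0 p j eq_pj; apply: contraTeq isT => /(even_nodes_sep _ _ (ltW h_gt0)).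
by rewrite eq_pj subrr normr0 leNgt pmulrn_lgt0 // h_gt0.
Qed.

Lemma even_nodes_dist01 (j : 'I_N.+1) :
  0 <= h -> val j = 1%N -> `|even_nodes ord0 - even_nodes j| = h *+ 2.
Proof.
move=> h_ge0 j1; rewrite /even_nodes j1 /= double0 mulr0n mul0r sub0r normrN.
by rewrite mulr_natl ger0_norm // mulrn_wge0.
Qed.

End BinomialPair.

Arguments binom_even_amp_ge {R m N} j.
Arguments norm_fourier_binom_le {R m h N Omega w}.
Arguments even_nodes_sep {R h N p j}.
Arguments even_nodes_dist01 {R h N j}.

Lemma powR_invnK (R : realType) (a : R) (k : nat) :
  0 <= a -> (0 < k)%N -> powR a k%:R^-1 ^+ k = a.
Proof.
move=> a_ge0 k_gt0; rewrite -powR_mulrn ?powR_ge0 // -powRrM.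
by rewrite mulVf ?pnatr_eq0 -?lt0n // powRr1.
Qed.

Theorem theorem2p2 (R : realType) (Omega sigma m_min : R) (n : nat)
    (hOmega : 0 < Omega) (hsigma : 0 < sigma) (hsm : sigma <= m_min)
    (hn : (2 <= n)%N) :
  exists (a y : 'I_n -> R) (ah yh : 'I_n.-1 -> R),
    [/\ injective y /\ (forall j, 0 < a j),
        (forall j, 0 < ah j),
        (forall w : R, - Omega <= w <= Omega ->
           `| fourier ah yh w - fourier a y w | < sigma%:C),
        ((forall j, m_min <= `|a j|) /\ (exists j, `|a j| = m_min)) &
        (let d := (2 * expR (-1)) / Omega
                  * powR (sigma / m_min) (1 / (2 * n%:R - 2)) in
         (forall p j : 'I_n, p != j -> d <= `|y p - y j|) /\
         (exists p j : 'I_n, p != j /\ `|y p - y j| = d))].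
Proof.
case: n hn => [|[|N]] // _.
have m_gt0 : 0 < m_min by apply: lt_le_trans hsm.
have -> : 1 / (2 * N.+2%:R - 2) = N.+1.*2%:R^-1 :> R.
  by rewrite div1r -muln2 natrM !mulrSr; congr _^-1; ring.
set P := powR (sigma / m_min) N.+1.*2%:R^-1.
have P_gt0 : 0 < P by rewrite powR_gt0 ?divr_gt0.
have PX : P ^+ N.+1.*2 = sigma / m_min by rewrite powR_invnK ?divr_ge0 ?ltW.
set h := expR (-1) / Omega * P.
have h_gt0 : 0 < h by rewrite !mulr_gt0 ?invr_gt0 ?expR_gt0.
have d_eq : h *+ 2 = 2 * expR (-1) / Omega * P by rewrite /h; ring.
exists (binom_even_amp m_min N.+1), (even_nodes h N.+1),
  (binom_odd_amp m_min N.+1), (odd_nodes h N.+1); split.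
- split=> [|j]; first exact: even_nodes_inj.
  exact: lt_le_trans m_gt0 (binom_even_amp_ge j (ltW m_gt0)).
- by move=> j; apply: binom_odd_amp_gt0.
- move=> w /andP[w_geN w_le].
  have w_norm_le : `|w| <= Omega by rewrite ler_norml w_geN.
  apply: le_lt_trans (norm_fourier_binom_le (ltW m_gt0) (ltW h_gt0) w_norm_le) _.
  have -> : h * Omega = expR (-1) * P by rewrite /h mulrAC divfK ?gt_eqF.
  rewrite ltcR exprMn PX mulrCA (mulrC m_min) divfK ?gt_eqF // gtr_pMl //.
  by rewrite exprn_ilt1 ?expR_ge0 ?expR_lt1 ?ltrN10.
- split=> [j|]; last by exists ord0; rewrite binom_even_amp0 gtr0_norm.
  have m_le := binom_even_amp_ge j (ltW m_gt0).
  by rewrite ger0_norm // (le_trans (ltW m_gt0)).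
- rewrite /= -d_eq; split=> [p j|]; first exact/even_nodes_sep/ltW.
  exists ord0, (Ordinal (isT : (1 < N.+2)%N)); split => //.
  by apply: even_nodes_dist01 (ltW h_gt0) _.
Qed.
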